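(* Suppose $\mathrm{Hom}_R(M,X)\neq0$ for every nonzero module $X\in\sigma[M]$, and let $P$ be a proper $M$-ideal of $M$. Then $P$ is a prime $M$-ideal if and only if $P$ is a Beachy-prime $M$-ideal.
   Context: $R$ is a ring with identity, modules are unital left $R$-modules, $M$ is a fixed left $R$-module; $\sigma[M]$ is the full subcategory of $R$-modules isomorphic to submodules of $M$-generated modules. $\mathrm{Ann}_M(X):=\bigcap_{f\in\mathrm{Hom}_R(M,X)}\ker f$. A submodule $N\le M$ is an $M$-ideal if $N$ is the intersection of the kernels of all homomorphisms from $M$ into modules of some class $\mathcal C$. For $N\le M$ and a module $X$, $N\cdot X$ is the intersection of the kernels of all homomorphisms $X\to W$ where $W$ ranges over modules with $f(N)=0$ for all $f\in\mathrm{Hom}_R(M,W)$ (for $Y\le X$, $N\cdot Y$ is formed regarding $Y$ as a module). A module $X\neq 0$ is an $M$-prime module if for all $N\le M$, $Y\le X$, $N\cdot Y=0$ implies $N\cdot X=0$ or $Y=0$. A proper $M$-ideal $P$ is a prime $M$-ideal if $P=\mathrm{Ann}_M(X)$ for some $M$-prime module $X$. A module $X$ is Beachy-$M$-prime if $\mathrm{Hom}_R(M,X)\ne0$ and $\mathrm{Ann}_M(Y)=\mathrm{Ann}_M(X)$ for every submodule $Y\le X$ with $\mathrm{Hom}_R(M,Y)\neq0$. A proper $M$-ideal $P$ is a Beachy-prime $M$-ideal if $P=\mathrm{Ann}_M(X)$ for some Beachy-$M$-prime module $X\in\sigma[M]$. *)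

(* Left R-modules are [lmodType R] over a (possibly zero) ring
   with identity [R : pzRingType]; R-homomorphisms are [{linear U -> V}].
   Subsets/submodules are Prop-valued predicates. *)
From HB Require Import structures.
From mathcomp Require Import all_boot all_order all_algebra.
Unset Printing Implicit Defensive.
Import GRing.Theory.
Local Open Scope ring_scope.

Section ModuleTheory.
Variable R : pzRingType.

Definition is_submod (X : lmodType R) (Y : X -> Prop) : Prop :=
  Y 0 /\ (forall y z, Y y -> Y z -> Y (y + z)) /\ (forall (a : R) y, Y y -> Y (a *: y)).

(* a (possibly non-total) function g : X -> W that is an R-homomorphism on the
   submodule Y; restricted to Y these are exactly the homomorphisms Y -> W *)
Definition hom_on (X W : lmodType R) (Y : X -> Prop) (g : X -> W) : Prop :=
  (forall y z, Y y -> Y z -> g (y + z) = g y + g z) /\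
  (forall (a : R) y, Y y -> g (a *: y) = a *: g y).

Definition M_generated (M G : lmodType R) : Prop :=
  forall g : G, exists (n : nat) (fs : 'I_n -> {linear M -> G}) (ms : 'I_n -> M),
    g = \sum_(i < n) fs i (ms i).

Definition in_sigma (M X : lmodType R) : Prop :=
  exists (G : lmodType R) (h : {linear X -> G}), M_generated M G /\ injective h.

Definition AnnM (M X : lmodType R) : M -> Prop :=
  fun m => forall f : {linear M -> X}, f m = 0.

(* Ann_M(Y) for a submodule Y of X (homs M -> Y = homs M -> X landing in Y) *)
Definition AnnM_sub (M X : lmodType R) (Y : X -> Prop) : M -> Prop :=
  fun m => forall f : {linear M -> X}, (forall m', Y (f m')) -> f m = 0.

Definition hom_nonzero_sub (M X : lmodType R) (Y : X -> Prop) : Prop :=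
  exists (f : {linear M -> X}) (m : M), (forall m', Y (f m')) /\ f m <> 0.

Definition hom_nonzero (M X : lmodType R) : Prop :=
  exists (f : {linear M -> X}) (m : M), f m <> 0.

Definition is_M_ideal (M : lmodType R) (N : M -> Prop) : Prop :=
  exists C : lmodType R -> Prop,
    forall m, N m <-> (forall (X : lmodType R), C X -> forall f : {linear M -> X}, f m = 0).

Definition proper_Msub (M : lmodType R) (N : M -> Prop) : Prop := exists m, ~ N m.

Definition kills (M : lmodType R) (N : M -> Prop) (W : lmodType R) : Prop :=
  forall (f : {linear M -> W}) n, N n -> f n = 0.

Definition dotM (M : lmodType R) (N : M -> Prop) (X : lmodType R) : X -> Prop :=
  fun x => forall W : lmodType R, kills M N W -> forall g : {linear X -> W}, g x = 0.

Definition dotM_sub (M : lmodType R) (N : M -> Prop) (X : lmodType R) (Y : X -> Prop)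
  : X -> Prop :=
  fun y => Y y /\ forall W : lmodType R, kills M N W ->
    forall g : X -> W, hom_on X W Y g -> g y = 0.

Definition M_prime_module (M X : lmodType R) : Prop :=
  (exists x : X, x <> 0) /\
  forall (N : M -> Prop) (Y : X -> Prop), is_submod M N -> is_submod X Y ->
    (forall y, dotM_sub M N X Y y -> y = 0) ->
    (forall x : X, dotM M N X x -> x = 0) \/ (forall y, Y y -> y = 0).

Definition prime_M_ideal (M : lmodType R) (P : M -> Prop) : Prop :=
  is_M_ideal M P /\ proper_Msub M P /\
  exists X : lmodType R, M_prime_module M X /\ forall m, P m <-> AnnM M X m.

Definition Beachy_M_prime (M X : lmodType R) : Prop :=
  hom_nonzero M X /\
  forall Y : X -> Prop, is_submod X Y -> hom_nonzero_sub M X Y ->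
    forall m, AnnM_sub M X Y m <-> AnnM M X m.

Definition Beachy_prime_M_ideal (M : lmodType R) (P : M -> Prop) : Prop :=
  is_M_ideal M P /\ proper_Msub M P /\
  exists X : lmodType R, in_sigma M X /\ Beachy_M_prime M X /\
    forall m, P m <-> AnnM M X m.

End ModuleTheory.

(* Both notions are annihilators Ann_M(X) of a module X; they differ in the
   primeness condition imposed on X.  The proof compares the two conditions
   through one basic fact: for a submodule Y of X, the M-ideal N = Ann_M(Y)
   satisfies N.Y = 0 (Y itself is a module killed by N), and conversely
   N.Y = 0 forces N <= Ann_M(Y).

   - Prime => Beachy-prime.  If X is M-prime, then Ann_M(Y) <= Ann_M(X) for
     every submodule Y with Hom(M, Y) <> 0 (apply primeness to N = Ann_M(Y)).
     This X need not lie in sigma[M], so we replace it by its M-trace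
     Tr(M, X), the sum of all images of homomorphisms M -> X: it is
     M-generated, has the same M-annihilator as X, and inherits the property
     above, hence is Beachy-M-prime.  This direction does not use the
     hypothesis on sigma[M].
   - Beachy-prime => prime.  If X in sigma[M] is Beachy-M-prime and N.Y = 0
     for a nonzero submodule Y, then Y is in sigma[M], so Hom(M, Y) <> 0 by
     hypothesis; hence N <= Ann_M(Y) = Ann_M(X), and X is killed by N. *)

From HB Require Import structures.
From mathcomp Require Import all_boot all_order all_algebra.
From mathcomp Require Import boolp.
Import GRing.Theory.
Local Open Scope ring_scope.
Set Implicit Arguments.
Unset Strict Implicit.

Section LinearMap.
Variables (R : pzRingType) (U V : lmodType R) (f : U -> V) (lin_f : linear f).

Definition linear_map_fun := f.
HB.instance Definition _ := GRing.isLinear.Build R U V *:%R linear_map_fun lin_f.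
Definition linear_map : {linear U -> V} := linear_map_fun.

End LinearMap.

Section Submodule.
Variables (R : pzRingType) (X : lmodType R) (S : X -> Prop) (hS : is_submod R X S).

Definition submod_pred : pred X := fun x => `[< S x >].
Definition submod_type (_ : is_submod R X S) := {x : X | submod_pred x}.
Local Notation T := (submod_type hS).

HB.instance Definition _ := [isSub of T for @sval X submod_pred].
HB.instance Definition _ := [Choice of T by <:].

Lemma submod_pred_closed : subsemimod_closed submod_pred.
Proof.
have [S0 [SD SZ]] := hS; split; first split.
- exact/asboolP.
- by move=> u v /asboolP Su /asboolP Sv; apply/asboolP; apply: SD.
- by move=> a u /asboolP Su; apply/asboolP; apply: SZ.
Qed.

HB.instance Definition _ :=
  GRing.SubChoice_isSubLmodule.Build R X submod_pred T submod_pred_closed.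

Lemma submod_valP (t : T) : S (val t).
Proof. by case: t => x /= /asboolP. Qed.

Lemma submod_val_eq0 (t : T) : val t = 0 -> t = 0.
Proof. by move=> t0; apply: val_inj; rewrite t0 (linear0 (val : {linear T -> X})). Qed.

Definition submod_proj (x : X) : T :=
  match pselect (S x) with left Sx => exist _ x (asboolT Sx) | right _ => 0 end.

Lemma submod_projK x : S x -> val (submod_proj x) = x.
Proof. by rewrite /submod_proj; case: pselect. Qed.

Lemma submod_proj_hom : hom_on R X T S submod_proj.
Proof.
have [_ [SD SZ]] := hS; split=> [y z Sy Sz | a y Sy]; apply: val_inj.
- by rewrite submod_projK ?linearD /= ?submod_projK //; apply: SD.
- by rewrite submod_projK ?linearZ /= ?submod_projK //; apply: SZ.
Qed.

Section Corestriction.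
Variables (M : lmodType R) (f : {linear M -> X}) (fS : forall m, S (f m)).

Lemma corestr_linear : linear (fun m => submod_proj (f m)).
Proof.
move=> a u v; apply: val_inj.
by rewrite submod_projK // !linearP /= !submod_projK.
Qed.

Definition corestr : {linear M -> T} := linear_map corestr_linear.

Lemma corestrE m : val (corestr m) = f m.
Proof. exact: submod_projK. Qed.

End Corestriction.

End Submodule.

Section Annihilators.
Variables (R : pzRingType) (M : lmodType R).

Lemma hom_on_comp_linear (X W : lmodType R) (Y : X -> Prop) (hY : is_submod R X Y)
  (f : {linear M -> X}) (fY : forall m, Y (f m)) (g : X -> W) (hg : hom_on R X W Y g) :
  linear (fun m => g (f m)).
Proof.
case: hY => _ [_ YZ]; case: hg => gD gZ.
by move=> a u v; rewrite linearP gD ?gZ ?fY //; apply: YZ.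
Qed.

Lemma dotM_image (X : lmodType R) (N : M -> Prop) (f : {linear M -> X}) n :
  N n -> dotM R M N X (f n).
Proof. by move=> Nn W killW g; apply: (killW (g \o f)). Qed.

Lemma dotM_eq0 (X : lmodType R) (N : M -> Prop) :
  (forall n, N n -> AnnM R M X n) -> forall x, dotM R M N X x -> x = 0.
Proof. by move=> NX x dotx; apply: (dotx X _ idfun) => f n /NX. Qed.

Lemma AnnM_sub_submod (X : lmodType R) (Y : X -> Prop) : is_submod R M (AnnM_sub R M X Y).
Proof.
split; [|split].
- by move=> f _; rewrite linear0.
- by move=> y z Ay Az f fY; rewrite linearD Ay // Az // addr0.
- by move=> a y Ay f fY; rewrite linearZ_LR Ay // scaler0.
Qed.

(* Ann_M(Y).Y = 0: the submodule Y, regarded as a module, is killed by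
   Ann_M(Y), and the projection onto Y is a homomorphism on Y. *)
Lemma dotM_sub_AnnM_sub (X : lmodType R) (Y : X -> Prop) (hY : is_submod R X Y) y :
  dotM_sub R M (AnnM_sub R M X Y) X Y y -> y = 0.
Proof.
case=> Yy dot_y.
have killY : kills R M (AnnM_sub R M X Y) (submod_type hY).
  move=> f n An; apply: submod_val_eq0.
  by apply: (An ((val : {linear _ -> X}) \o f)) => m; apply: submod_valP.
have := dot_y _ killY _ (submod_proj_hom hY).
by rewrite -{2}(submod_projK hY Yy) => ->; rewrite linear0.
Qed.

Lemma AnnM_sub_of_dotM_sub (X : lmodType R) (Y : X -> Prop) (hY : is_submod R X Y)
  (N : M -> Prop) :
  (forall y, dotM_sub R M N X Y y -> y = 0) -> forall n, N n -> AnnM_sub R M X Y n.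
Proof.
move=> NY0 n Nn f fY; apply: NY0; split=> [|W killW g hg]; first exact: fY.
exact: (killW (linear_map (hom_on_comp_linear hY fY hg))).
Qed.

Lemma M_prime_AnnM_sub (X : lmodType R) (Y : X -> Prop) (hY : is_submod R X Y) :
  M_prime_module R M X -> hom_nonzero_sub R M X Y ->
  forall m, AnnM_sub R M X Y m -> AnnM R M X m.
Proof.
case=> _ Xprime [f [m0 [fY fm0]]] m Am.
case: (Xprime _ Y (AnnM_sub_submod Y) hY (dotM_sub_AnnM_sub hY)) => [NX0 | Y0].
- by move=> g; apply/NX0/dotM_image.
- by case: fm0; apply: Y0.
Qed.

Lemma hom_nonzero_of_not_AnnM (X : lmodType R) m : ~ AnnM R M X m -> hom_nonzero R M X.
Proof. by move=> /existsNP [f fm]; exists f, m. Qed.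

End Annihilators.

Section SubmoduleTransfer.
Variables (R : pzRingType) (M X : lmodType R) (S : X -> Prop) (hS : is_submod R X S).
Local Notation T := (submod_type hS).

Lemma in_sigma_submod : in_sigma R M X -> in_sigma R M T.
Proof.
case=> G [h [Ggen h_inj]]; exists G, (h \o val); split=> // s t /h_inj.
exact: val_inj.
Qed.

Lemma hom_nonzero_submod : hom_nonzero R M T -> hom_nonzero_sub R M X S.
Proof.
case=> f [m fm]; exists ((val : {linear T -> X}) \o f), m; split=> [m'|].
- exact: submod_valP.
- by move=> /submod_val_eq0.
Qed.

Definition submod_image (Y : T -> Prop) : X -> Prop := fun x => exists2 t, Y t & val t = x.

Lemma submod_image_submod (Y : T -> Prop) : is_submod R T Y -> is_submod R X (submod_image Y).
Proof.
case=> Y0 [YD YZ]; split; [|split].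
- by exists 0 => //; rewrite linear0.
- by move=> _ _ [s Ys <-] [t Yt <-]; exists (s + t); rewrite ?linearD //; apply: YD.
- by move=> a _ [t Yt <-]; exists (a *: t); rewrite ?linearZ //; apply: YZ.
Qed.

Lemma hom_nonzero_sub_image (Y : T -> Prop) :
  hom_nonzero_sub R M T Y -> hom_nonzero_sub R M X (submod_image Y).
Proof.
case=> f [m [fY fm]]; exists ((val : {linear T -> X}) \o f), m; split=> [m'|].
- by exists (f m').
- by move=> /submod_val_eq0.
Qed.

(* Homomorphisms M -> X landing in the image of Y factor through Y. *)
Lemma AnnM_sub_image (Y : T -> Prop) m :
  AnnM_sub R M T Y m -> AnnM_sub R M X (submod_image Y) m.
Proof.
move=> Am f fY.
have fS m' : S (f m') by have [t _ <-] := fY m'; apply: submod_valP.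
have corestrY m' : Y (corestr hS fS m').
  have [t Yt ft] := fY m'.
  suff -> : corestr hS fS m' = t by [].
  by apply: val_inj; rewrite corestrE ft.
by rewrite -(corestrE hS fS) Am // (linear0 (val : {linear T -> X})).
Qed.

End SubmoduleTransfer.

Section Trace.
Variables (R : pzRingType) (M X : lmodType R).

Definition trace (x : X) : Prop :=
  exists (n : nat) (fs : 'I_n -> {linear M -> X}) (ms : 'I_n -> M),
    x = \sum_(i < n) fs i (ms i).

Lemma trace_submod : is_submod R X trace.
Proof.
split; [|split].
- by exists 0%N, (fun _ => \0), (fun _ => 0); rewrite big_ord0.
- move=> _ _ [n1 [f1 [m1 ->]]] [n2 [f2 [m2 ->]]].
  exists (n1 + n2)%N, (fun i => match split i with inl j => f1 j | inr j => f2 j end).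
  exists (fun i => match split i with inl j => m1 j | inr j => m2 j end).
  rewrite big_split_ord /=; congr (_ + _); apply: eq_bigr => i _.
  + by rewrite -[lshift n2 i]/(unsplit (inl i)) unsplitK.
  + by rewrite -[rshift n1 i]/(unsplit (inr i)) unsplitK.
- move=> a _ [n [fs [ms ->]]]; exists n, fs, (fun i => a *: ms i).
  by rewrite scaler_sumr; apply: eq_bigr => i _; rewrite linearZ.
Qed.

Lemma trace_image (f : {linear M -> X}) m : trace (f m).
Proof. by exists 1%N, (fun _ => f), (fun _ => m); rewrite big_ord1. Qed.

Definition trace_module := submod_type trace_submod.

Definition trace_corestr (f : {linear M -> X}) : {linear M -> trace_module} :=
  corestr trace_submod (trace_image f).

Lemma trace_M_generated : M_generated R M trace_module.
Proof.
move=> t; have [n [fs [ms t_sum]]] := submod_valP t.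
exists n, (fun i => trace_corestr (fs i)), ms; apply: val_inj.
rewrite t_sum (linear_sum (val : {linear trace_module -> X})).
by apply: eq_bigr => i _; apply/esym/corestrE.
Qed.

Lemma trace_in_sigma : in_sigma R M trace_module.
Proof. by exists trace_module, idfun; split; [exact: trace_M_generated | exact: inj_id]. Qed.

Lemma AnnM_trace m : AnnM R M trace_module m <-> AnnM R M X m.
Proof.
split=> Am f.
- by rewrite -(corestrE trace_submod (trace_image f)) Am linear0.
- by apply: submod_val_eq0; apply: (Am ((val : {linear trace_module -> X}) \o f)).
Qed.

End Trace.

Section PrimeVersusBeachy.
Variables (R : pzRingType) (M X : lmodType R).

Theorem trace_Beachy_M_prime :
  M_prime_module R M X -> hom_nonzero R M X -> Beachy_M_prime R M (trace_module M X).
Proof.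
move=> Xprime [f [m fm]]; split.
  by exists (trace_corestr f), m; move/(congr1 val); rewrite corestrE linear0.
move=> Y hY Yhom m'; split=> [Am | Am g _]; last exact: Am.
apply/AnnM_trace/(M_prime_AnnM_sub (submod_image_submod hY) Xprime).
- exact: hom_nonzero_sub_image.
- exact: AnnM_sub_image.
Qed.

Theorem Beachy_M_prime_is_M_prime :
  (forall Z : lmodType R, in_sigma R M Z -> (exists z : Z, z <> 0) -> hom_nonzero R M Z) ->
  in_sigma R M X -> Beachy_M_prime R M X -> M_prime_module R M X.
Proof.
move=> sigma_hom Xsigma [[f [m fm]] XBeachy]; split; first by exists (f m).
move=> N Y _ hY NY0.
case: (pselect (forall y, Y y -> y = 0)) => [|Ynz]; [by right | left].
move/existsNP: Ynz => [y /not_implyP [Yy y0]].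
have Yhom : hom_nonzero R M (submod_type hY).
  apply: sigma_hom; first exact: in_sigma_submod.
  by exists (submod_proj hY y) => /(congr1 val); rewrite submod_projK // linear0.
apply: dotM_eq0 => n Nn; apply: (XBeachy Y hY (hom_nonzero_submod Yhom) n).1.
exact: (AnnM_sub_of_dotM_sub hY NY0 Nn).
Qed.

End PrimeVersusBeachy.

Unset Implicit Arguments.
Set Strict Implicit.

Theorem proposition4p1 (R : pzRingType) (M : lmodType R)
  (hM : forall X : lmodType R, in_sigma R M X -> (exists x : X, x <> 0) -> hom_nonzero R M X)
  (P : M -> Prop) (hP : is_M_ideal R M P) (hPp : proper_Msub R M P) :
  prime_M_ideal R M P <-> Beachy_prime_M_ideal R M P.
Proof.
split.
- case=> _ [_ [X [Xprime PX]]].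
  have [m Pm] := hPp.
  have Xhom : hom_nonzero R M X by apply: (@hom_nonzero_of_not_AnnM _ _ _ m) => /PX.
  split=> //; split=> //; exists (trace_module M X); split; first exact: trace_in_sigma.
  split; first exact: trace_Beachy_M_prime.
  by move=> m'; apply: (iff_trans (PX m')); apply: iff_sym; apply: AnnM_trace.
- case=> _ [_ [X [Xsigma [XBeachy PX]]]].
  split=> //; split=> //; exists X; split=> //.
  exact: Beachy_M_prime_is_M_prime.
Qed.
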